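(* Let $R$ be a commutative ring and $F$ a countably presented flat $R$-module. Let $T \subseteq R$ be a multiplicative subset such that $T^{-1}F$ is a projective $T^{-1}R$-module. Then there is a countable multiplicative subset $S \subseteq T$ such that $S^{-1}F$ is a projective $S^{-1}R$-module. *)

(* commutative rings as comPzRingType (possibly the zero ring,
   since a localization can be the zero ring), modules as lmodType. *)
From HB Require Import structures.
From mathcomp Require Import all_boot all_algebra.
Set Implicit Arguments. Unset Strict Implicit. Unset Printing Implicit Defensive.
Import GRing.Theory.
Local Open Scope ring_scope.

Section Defs.
Variable R : comPzRingType.

Definition multiplicative (S : R -> Prop) : Prop :=
  S 1 /\ (forall a b, S a -> S b -> S (a * b)).

(* countable subset: enumerated by nat (S is nonempty when multiplicative) *)
Definition countable_subset (S : R -> Prop) : Prop :=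
  exists e : nat -> R, forall r, S r <-> exists n, e n = r.

Definition lincomb (F : lmodType R) (c : seq R) (x : nat -> F) : F :=
  \sum_(i < size c) c`_i *: x i.

(* countably presented: exact sequence R^(N) --rel--> R^(N) --x--> F --> 0,
   elements of R^(N) being finitely supported sequences (seq R) *)
Definition countably_presented (F : lmodType R) : Prop :=
  exists (x : nat -> F) (rel : nat -> seq R),
    [/\ forall v : F, exists c : seq R, v = lincomb c x,
        forall k, lincomb (rel k) x = 0
      & forall c : seq R, lincomb c x = 0 ->
          exists d : seq R, forall i, c`_i = \sum_(k < size d) d`_k * (rel k)`_i].

Definition balanced (M N : lmodType R) (A : zmodType) (b : M -> N -> A) : Prop :=
  [/\ forall m m' n, b (m + m') n = b m n + b m' n,
      forall m n n', b m (n + n') = b m n + b m n'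
    & forall r m n, b (r *: m) n = b m (r *: n)].

(* the element sum_i m_i (x) n_i of M (x)_R N is zero, i.e. it is killed by
   every balanced map (universal property of the tensor product) *)
Definition tensor_zero (M N : lmodType R) (s : seq (M * N)) : Prop :=
  forall (A : zmodType) (b : M -> N -> A), balanced b ->
    \sum_(p <- s) b p.1 p.2 = 0.

(* flat: - (x)_R F preserves injective linear maps *)
Definition flat (F : lmodType R) : Prop :=
  forall (M N : lmodType R) (f : {linear M -> N}), injective f ->
    forall s : seq (M * F),
      tensor_zero [seq (f p.1, p.2) | p <- s] -> tensor_zero s.

(* phi : R -> R' is a localization of R at S (as Mathlib's IsLocalization) *)
Definition is_localization (S : R -> Prop) (R' : comPzRingType)
    (phi : {rmorphism R -> R'}) : Prop :=
  [/\ forall s, S s -> exists y, phi s * y = 1,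
      forall z : R', exists r s, S s /\ z * phi s = phi r
    & forall r, phi r = 0 -> exists s, S s /\ s * r = 0].

(* (R', F') is the localization S^-1 R, S^-1 F with structure maps phi, psi
   (as Mathlib's IsLocalization + IsLocalizedModule) *)
Definition is_localization_module (S : R -> Prop) (F : lmodType R)
    (R' : comPzRingType) (phi : {rmorphism R -> R'}) (F' : lmodType R')
    (psi : F -> F') : Prop :=
  [/\ is_localization S phi,
      forall x y, psi (x + y) = psi x + psi y,
      forall r x, psi (r *: x) = phi r *: psi x,
      forall z : F', exists x s, S s /\ phi s *: z = psi x
    & forall x, psi x = 0 -> exists s, S s /\ s *: x = 0].

End Defs.

Definition projective (R : pzRingType) (P : lmodType R) : Prop :=
  forall (M N : lmodType R) (g : {linear M -> N}) (f : {linear P -> N}),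
    (forall n, exists m, g m = n) ->
    exists h : {linear P -> M}, forall p, g (h p) = f p.

(* A projective module generated by the [x n] has a dual basis: coordinates
   [a n l], finitely many for each [n], with [x n = \sum_l a n l *: x l],
   that respect the relations between the [x n].  Over [T^-1 R] these are
   countably many fractions [r n l / t n], and the countably many identities
   they satisfy in [T^-1 F] already hold in [F] after multiplication by
   elements [u n] and [v k l] of [T].  The same fractions therefore form a
   dual basis of [S^-1 F], where [S] is the monoid generated by all [t n],
   [u n] and [v k l], so [S^-1 F] is projective. *)

From Pilot Require Import Defs.
From HB Require Import structures.
From mathcomp Require Import all_boot all_algebra.
From mathcomp Require Import finmap ring.
From mathcomp.multinomials Require Import monalg.
From Stdlib Require Import ClassicalEpsilon.

Set Implicit Arguments. Unset Strict Implicit. Unset Printing Implicit Defensive.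
Import GRing.Theory.
(* Undo the shadowing of [Defs.multiplicative] by [GRing.Theory.multiplicative]. *)
Import Defs.
Local Open Scope ring_scope.

Lemma sum_ord_widen (V : zmodType) (f : nat -> V) m n : (m <= n)%N ->
  (forall i, (m <= i)%N -> f i = 0) -> \sum_(i < m) f i = \sum_(i < n) f i.
Proof.
move=> le_mn f0; rewrite (big_ord_widen n f le_mn) big_mkcond /=.
by apply: eq_bigr => i _; case: ltnP => // /f0.
Qed.

Lemma big_nth_map (R R' : pzRingType) (phi : {rmorphism R -> R'}) (V : zmodType)
    (G : R' -> nat -> V) (c : seq R) :
  \sum_(i < size (map phi c)) G (map phi c)`_i i = \sum_(i < size c) G (phi c`_i) i.
Proof.
rewrite -(big_mkord xpredT (fun i => G (map phi c)`_i i)) size_map.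
rewrite -(big_mkord xpredT (fun i => G (phi c`_i) i)).
by apply: eq_big_nat => i /andP[_ ic]; rewrite (nth_map 0).
Qed.

Definition restrict_scalars (R R' : pzRingType) (phi : {rmorphism R -> R'})
  (M : lmodType R') : Type := M.

Section RestrictScalars.
Variables (R R' : pzRingType) (phi : {rmorphism R -> R'}) (M : lmodType R').
Local Notation restrict_scalars := (restrict_scalars phi M).
HB.instance Definition _ := GRing.Zmodule.on restrict_scalars.

Definition restricted_scale (r : R) (m : restrict_scalars) : restrict_scalars :=
  phi r *: (m : M).

Fact restricted_scaleA a b m :
  restricted_scale a (restricted_scale b m) = restricted_scale (a * b) m.
Proof. by rewrite /restricted_scale scalerA rmorphM. Qed.
Fact restricted_scale1 m : restricted_scale 1 m = m.
Proof. by rewrite /restricted_scale rmorph1 scale1r. Qed.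
Fact restricted_scaleDr a : {morph restricted_scale a : m m' / m + m'}.
Proof. by move=> m m'; rewrite /restricted_scale scalerDr. Qed.
Fact restricted_scaleDl m : {morph restricted_scale^~ m : a b / a + b}.
Proof. by move=> a b; rewrite /restricted_scale rmorphD scalerDl. Qed.

HB.instance Definition _ := GRing.Zmodule_isLmodule.Build R restrict_scalars
  restricted_scaleA restricted_scale1 restricted_scaleDr restricted_scaleDl.

Lemma restrict_scalarsZ r (m : restrict_scalars) : r *: m = phi r *: (m : M).
Proof. by []. Qed.

End RestrictScalars.

Section FreeModule.
Variable R : pzRingType.

(* monalg makes [{malg R[K]}] a module only over nonzero rings, while the
   localizations below may be the zero ring. *)
Definition free_module : Type := {malg R[nat]}.
HB.instance Definition _ := GRing.Zmodule.on free_module.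

Definition free_scale (c : R) (g : free_module) : free_module :=
  [malg k in msupp g => c * g@_k].

Lemma free_scaleE c g k : (free_scale c g)@_k = c * g@_k.
Proof. by rewrite mcoeffE; case: msuppP; rewrite ?mulr0. Qed.

Fact free_scaleA a b g : free_scale a (free_scale b g) = free_scale (a * b) g.
Proof. by apply/malgP => k; rewrite !free_scaleE mulrA. Qed.
Fact free_scale1 g : free_scale 1 g = g.
Proof. by apply/malgP => k; rewrite free_scaleE mul1r. Qed.
Fact free_scaleDr a : {morph free_scale a : g h / g + h}.
Proof. by move=> g h; apply/malgP => k; rewrite !(mcoeffD, free_scaleE) mulrDr. Qed.
Fact free_scaleDl g : {morph free_scale^~ g : a b / a + b}.
Proof. by move=> a b; apply/malgP => k; rewrite !(mcoeffD, free_scaleE) mulrDl. Qed.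

HB.instance Definition _ := GRing.Zmodule_isLmodule.Build R free_module
  free_scaleA free_scale1 free_scaleDr free_scaleDl.

Lemma mcoeffZ_free c (g : free_module) k : (c *: g)@_k = c * g@_k.
Proof. exact: free_scaleE. Qed.

Definition free_bound (g : free_module) : nat := \max_(k <- msupp g) k.+1.

Lemma mcoeff_free_bound g k : (free_bound g <= k)%N -> g@_k = 0.
Proof.
move=> le_gk; apply: mcoeff_outdom; apply: contraTN le_gk => k_g.
by rewrite -ltnNge /free_bound (big_rem k k_g) /= leq_maxl.
Qed.

Variables (P : lmodType R) (y : nat -> P).

Definition free_comb (g : free_module) : P :=
  \sum_(k < free_bound g) g@_(k : nat) *: y k.

Lemma free_combE g K : (forall k, (K <= k)%N -> g@_k = 0) ->
  free_comb g = \sum_(k < K) g@_(k : nat) *: y k.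
Proof.
pose f k := g@_k *: y k.
have f0 K' : (forall k, (K' <= k)%N -> g@_k = 0) -> forall k, (K' <= k)%N -> f k = 0.
  by move=> gK' k /gK' gk; rewrite /f gk scale0r.
move=> gK; rewrite /free_comb (@sum_ord_widen _ f _ (maxn (free_bound g) K)).
- by apply/esym/sum_ord_widen; [exact: leq_maxr | exact: f0].
- exact: leq_maxl.
by apply: f0 => k /mcoeff_free_bound.
Qed.

Lemma free_comb_is_linear : linear free_comb.
Proof.
move=> a g h; set K := maxn (free_bound (a *: g + h)) (maxn (free_bound g) (free_bound h)).
have boundK g' : (free_bound g' <= K)%N -> forall k, (K <= k)%N -> g'@_k = 0.
  by move=> g'K k /(leq_trans g'K) /mcoeff_free_bound.
rewrite !(free_combE (boundK _ _)) ?leq_maxl //; last 2 first.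
- by rewrite leq_max leq_maxr orbT.
- by rewrite leq_max leq_maxl orbT.
rewrite scaler_sumr -big_split; apply: eq_bigr => k _.
by rewrite mcoeffD mcoeffZ_free scalerDl scalerA.
Qed.

HB.instance Definition _ := GRing.isLinear.Build R free_module P _ free_comb
  free_comb_is_linear.

Lemma free_combU a i : free_comb << a *g i >> = a *: y i.
Proof.
rewrite (@free_combE _ i.+1) => [|k ik]; last by rewrite mcoeffU ltn_eqF.
rewrite big_ord_recr /= mcoeffUU big1 ?add0r // => k _.
by rewrite mcoeffU gtn_eqF ?scale0r.
Qed.

End FreeModule.

Section Lincomb.
Variables (R : comPzRingType) (V : lmodType R).
Implicit Types (c : seq R) (y : nat -> V).

Lemma lincomb_widen c y K : (size c <= K)%N -> lincomb c y = \sum_(i < K) c`_i *: y i.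
Proof.
move=> cK; apply: (@sum_ord_widen _ (fun i => c`_i *: y i) _ _ cK) => i ci.
by rewrite nth_default ?scale0r.
Qed.

Lemma lincomb_mkseq f K y : lincomb (mkseq f K) y = \sum_(i < K) f i *: y i.
Proof. by rewrite /lincomb size_mkseq; apply: eq_bigr => i _; rewrite nth_mkseq. Qed.

Lemma lincomb_delta n y : lincomb (mkseq (fun i => (i == n)%:R) n.+1) y = y n.
Proof.
rewrite lincomb_mkseq big_ord_recr /= eqxx scale1r big1 ?add0r // => i _.
by rewrite ltn_eqF ?scale0r.
Qed.

Lemma lincomb_combine a c c' y K : (size c <= K)%N -> (size c' <= K)%N ->
  lincomb (mkseq (fun i => a * c`_i + c'`_i) K) y = a *: lincomb c y + lincomb c' y.
Proof.
move=> cK c'K; rewrite lincomb_mkseq (lincomb_widen _ cK) (lincomb_widen _ c'K).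
by rewrite scaler_sumr -big_split; apply: eq_bigr => i _; rewrite scalerDl scalerA.
Qed.

Lemma lincomb_scale a c y : a *: lincomb c y = lincomb (map ( *%R a) c) y.
Proof.
rewrite /lincomb size_map scaler_sumr; apply: eq_bigr => i _.
by rewrite (nth_map 0) // scalerA.
Qed.

Lemma linear_lincomb (U : lmodType R) (h : {linear V -> U}) c y :
  h (lincomb c y) = lincomb c (h \o y).
Proof. by rewrite linear_sum; apply: eq_bigr => i _; rewrite linearZ. Qed.

End Lincomb.

Lemma lincomb_map (R R' : comPzRingType) (phi : {rmorphism R -> R'}) (M : lmodType R')
    (c : seq R) (y : nat -> M) :
  lincomb (map phi c) y = lincomb c (y : nat -> restrict_scalars phi M).
Proof. exact: (big_nth_map phi (fun a i => a *: y i)). Qed.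

Section GeneratedMonoid.
Variables (R : comPzRingType) (I : countType) (e : I -> R).

Definition generated_monoid (a : R) : Prop := exists s : seq I, a = \prod_(i <- s) e i.

Lemma generated_monoid_multiplicative : multiplicative generated_monoid.
Proof.
split; first by exists [::]; rewrite big_nil.
by move=> _ _ [s ->] [s' ->]; exists (s ++ s'); rewrite big_cat.
Qed.

Lemma generated_monoid_gen i : generated_monoid (e i).
Proof. by exists [:: i]; rewrite big_seq1. Qed.

Lemma generated_monoid_sub (T : R -> Prop) :
  multiplicative T -> (forall i, T (e i)) -> forall a, generated_monoid a -> T a.
Proof.
case=> T1 TM Te _ [s ->]; elim: s => [|i s IHs]; first by rewrite big_nil.
by rewrite big_cons; apply: TM.
Qed.

Lemma generated_monoid_countable : countable_subset generated_monoid.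
Proof.
exists (fun n => \prod_(i <- odflt [::] (@choice.unpickle (seq I) n)) e i) => a.
split; first by case=> s ->; exists (choice.pickle s); rewrite choice.pickleK.
by case=> n <-; eexists.
Qed.

End GeneratedMonoid.

Section PresentationLift.
Variables (R : comPzRingType) (F : lmodType R) (x : nat -> F) (rel : nat -> seq R).
Hypothesis gen : forall v : F, exists c, v = lincomb c x.
Hypothesis relC : forall c, lincomb c x = 0 ->
  exists d : seq R, forall i, c`_i = \sum_(k < size d) d`_k * (rel k)`_i.
Variables (V : lmodType R) (b : nat -> V).
Hypothesis rel_b : forall k, lincomb (rel k) b = 0.

Lemma lincomb_relations0 c : lincomb c x = 0 -> lincomb c b = 0.
Proof.
case/relC => d cd; pose K := maxn (size c) (\max_(k < size d) size (rel k)).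
rewrite (lincomb_widen _ (leq_maxl _ _ : size c <= K)%N).
under eq_bigr do rewrite cd scaler_suml.
rewrite exchange_big big1 // => k _.
have relK : (size (rel k) <= K)%N := leq_trans (leq_bigmax k) (leq_maxr _ _).
under eq_bigr do rewrite -scalerA.
by rewrite -scaler_sumr -(lincomb_widen _ relK) rel_b scaler0.
Qed.

Lemma lincomb_relations_congr c c' : lincomb c x = lincomb c' x -> lincomb c b = lincomb c' b.
Proof.
move=> e; pose d := mkseq (fun i => -1 * c`_i + c'`_i) (maxn (size c) (size c')).
have d_comb y : lincomb d y = lincomb c' y - lincomb c y.
  by rewrite lincomb_combine ?leq_maxl ?leq_maxr // scaleN1r addrC.
by apply/eqP; rewrite eq_sym -subr_eq0 -d_comb lincomb_relations0 // d_comb e subrr.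
Qed.

Lemma presentation_lift : exists W : {linear F -> V}, forall n, W (x n) = b n.
Proof.
have [coef coefP] := choice _ gen.
pose W v := lincomb (coef v) b.
have W_lincomb c : W (lincomb c x) = lincomb c b.
  by apply: lincomb_relations_congr; rewrite -coefP.
have W_linear : linear W.
  move=> a v w; have [c ->] := gen v; have [c' ->] := gen w.
  pose K := maxn (size c) (size c').
  rewrite -(lincomb_combine a x (leq_maxl _ _ : size c <= K)%N (leq_maxr _ _)).
  by rewrite !W_lincomb lincomb_combine ?leq_maxl ?leq_maxr.
exists (HB.pack_for {linear F -> V} W (GRing.isLinear.Build _ _ _ _ W W_linear)).
by move=> n /=; rewrite -(lincomb_delta n x) W_lincomb lincomb_delta.
Qed.
End PresentationLift.

(* [a n l] plays the role of [f_l (y n)] for a dual basis [(y_n, f_l)] of [P];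
   the last condition makes the [f_l] well defined on the module presented by
   the relations [rels]. *)
Definition dual_basis (R : comPzRingType) (P : lmodType R) (y : nat -> P)
    (rels : nat -> seq R) (N : nat -> nat) (a : nat -> nat -> R) : Prop :=
  [/\ forall n l, (N n <= l)%N -> a n l = 0,
      forall n, \sum_(l < N n) a n l *: y l = y n
    & forall k l, \sum_(i < size (rels k)) (rels k)`_i * a i l = 0].

(* A dual basis of [S^-1 F] with coordinates [r n l / t n], written over [R]:
   [u] and [v] witness its identities, which therefore hold after inverting
   any multiplicative set containing [t], [u] and [v]. *)
Definition cleared_dual_basis (R : comPzRingType) (F : lmodType R) (x : nat -> F)
    (rel : nat -> seq R) (N : nat -> nat) (t u : nat -> R) (r v : nat -> nat -> R) :=
  [/\ forall n l, (N n <= l)%N -> r n l = 0,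
      forall n, u n *: (\sum_(l < N n) r n l *: x l - t n *: x n) = 0
    & forall k l, v k l * \sum_(i < size (rel k))
        (rel k)`_i * (\prod_(j < size (rel k) | j != i) t j) * r i l = 0].

Lemma rmorph_cleared_sum (R R' : comPzRingType) (phi : {rmorphism R -> R'}) (c : seq R)
    (t r : nat -> R) (alpha : nat -> R') :
  (forall i, phi (t i) * alpha i = phi (r i)) ->
  phi (\sum_(i < size c) c`_i * (\prod_(j < size c | j != i) t j) * r i)
    = phi (\prod_(j < size c) t j) * \sum_(i < size c) phi c`_i * alpha i.
Proof.
move=> t_alpha; rewrite rmorph_sum mulr_sumr; apply: eq_bigr => i _.
rewrite [in RHS](bigD1 i) //= !rmorphM -t_alpha; ring.
Qed.

Section Localization.
Variables (R R' : comPzRingType) (S : R -> Prop) (phi : {rmorphism R -> R'}).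
Variables (F : lmodType R) (F' : lmodType R') (psi : F -> F').
Hypotheses (S_mul : multiplicative S) (loc : is_localization_module S phi psi).

Lemma localization_scaler_inj (M : lmodType R') s (m m' : M) :
  S s -> phi s *: m = phi s *: m' -> m = m'.
Proof.
case: loc => -[unit_phi _ _] _ _ _ _ /unit_phi[y sy] e.
by rewrite -[m]scale1r -[m']scale1r -sy mulrC -!scalerA e.
Qed.

Lemma localization_mulr_inj s (a b : R') : S s -> phi s * a = phi s * b -> a = b.
Proof. exact: (@localization_scaler_inj R'^o). Qed.

Let psi_linear : linear (psi : F -> restrict_scalars phi F').
Proof. by case: loc => _ psiD psiZ _ _ a v w; rewrite psiD psiZ. Qed.

Let psiL : {linear F -> restrict_scalars phi F'} :=
  HB.pack (psi : F -> restrict_scalars phi F') (GRing.isLinear.Build _ _ _ _ _ psi_linear).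

Lemma psiZ r v : psi (r *: v) = phi r *: psi v. Proof. exact: (linearZ_LR psiL). Qed.
Lemma psiD : {morph psi : v w / v + w}. Proof. exact: raddfD psiL. Qed.
Lemma psiB : {morph psi : v w / v - w}. Proof. exact: raddfB psiL. Qed.
Lemma psi0 : psi 0 = 0. Proof. exact: raddf0 psiL. Qed.
Lemma psi_sum n (v : 'I_n -> F) : psi (\sum_(i < n) v i) = \sum_(i < n) psi (v i).
Proof. exact: (big_morph psi psiD psi0). Qed.

Lemma psi_lincomb c (x : nat -> F) : psi (lincomb c x) = lincomb (map phi c) (psi \o x).
Proof. by rewrite lincomb_map -(linear_lincomb psiL). Qed.

Lemma psi_torsion s v : S s -> s *: v = 0 -> psi v = 0.
Proof.
by move=> Ss sv; apply: (localization_scaler_inj Ss); rewrite -psiZ sv psi0 scaler0.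
Qed.

Lemma phi_torsion s r : S s -> s * r = 0 -> phi r = 0.
Proof.
by move=> Ss sr; apply: (localization_mulr_inj Ss); rewrite -rmorphM sr rmorph0 mulr0.
Qed.

Lemma localization_generated (x : nat -> F) : (forall v, exists c, v = lincomb c x) ->
  forall z, exists c, z = lincomb c (psi \o x).
Proof.
move=> gen z; case: loc => -[unit_phi _ _] _ _ frac _.
have [v [s [Ss sz]]] := frac z; have [y sy] := unit_phi s Ss; have [c vc] := gen v.
exists (map ( *%R y) (map phi c)).
by rewrite -lincomb_scale -psi_lincomb -vc -sz scalerA mulrC sy scale1r.
Qed.

Lemma common_denominator (z : nat -> R') K : exists s (r : nat -> R),
  [/\ S s, forall l, (l < K)%N -> phi s * z l = phi (r l)
     & forall l, (K <= l)%N -> r l = 0].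
Proof.
case: S_mul => S1 SM; case: loc => -[_ frac _] _ _ _ _.
elim: K => [|K [s [r [Ss sz r0]]]]; first by exists 1, (fun _ => 0).
have [r' [s' [Ss' e']]] := frac (z K).
exists (s * s'), (fun l => if (l < K)%N then r l * s' else if l == K then r' * s else 0).
split; first exact: SM.
- move=> l; rewrite ltnS leq_eqVlt => /orP[/eqP ->|lK].
    by rewrite ltnn eqxx !rmorphM -e'; ring.
  by rewrite lK !rmorphM -sz //; ring.
by move=> l Kl; rewrite ltnNge ltnW // gtn_eqF.
Qed.

Section Lift.
Variables (M : lmodType R') (W : {linear F -> restrict_scalars phi M}).

Let fraction z : {p : R * F * R' |
  [/\ S p.1.1, phi p.1.1 *: z = psi p.1.2 & phi p.1.1 * p.2 = 1]}.
Proof.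
apply: constructive_indefinite_description.
case: loc => -[unit_phi _ _] _ _ frac _.
have [v [s [Ss e]]] := frac z; have [y sy] := unit_phi s Ss.
by exists (s, v, y).
Qed.

Let lift z : M := (sval (fraction z)).2 *: (W (sval (fraction z)).1.2 : M).

Let liftP z s v : S s -> phi s *: z = psi v -> phi s *: lift z = W v.
Proof.
rewrite /lift; case: (fraction z) => -[[s' v'] y] /= [Ss' e' s'y] Ss e.
have [o [So ov]] : exists o, S o /\ o *: (s' *: v - s *: v') = 0.
  case: loc => _ _ _ _; apply.
  by rewrite psiB !psiZ -e -e' !scalerA mulrC subrr.
have ev : phi s' *: W v = phi s *: W v'.
  apply/eqP; rewrite -subr_eq0; apply/eqP/(localization_scaler_inj So).
  by rewrite scaler0 -!restrict_scalarsZ -!linearZ -linearB -linearZ ov linear0.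
apply: (localization_scaler_inj Ss'); rewrite ev !scalerA.
by rewrite mulrAC s'y mul1r.
Qed.

Let lift_linear : linear lift.
Proof.
move=> a z1 z2; case: loc => -[_ frac_R _] _ _ frac _; case: S_mul => _ SM.
have [r3 [s3 [S3 e3]]] := frac_R a.
have [v1 [s1 [S1 e1]]] := frac z1; have [v2 [s2 [S2 e2]]] := frac z2.
have S123 : S (s1 * s2 * s3) := SM _ _ (SM _ _ S1 S2) S3.
have e : phi (s1 * s2 * s3) *: (a *: z1 + z2) = psi ((s2 * r3) *: v1 + (s1 * s3) *: v2).
  rewrite psiD !psiZ -e1 -e2 !scalerA scalerDr !scalerA !rmorphM -e3.
  by congr (_ *: _ + _ *: _); ring.
apply: (localization_scaler_inj S123).
rewrite (liftP S123 e) linearD !linearZ /= !restrict_scalarsZ.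
rewrite -(liftP S1 e1) -(liftP S2 e2) scalerDr !scalerA !rmorphM -e3.
by congr (_ *: _ + _ *: _); ring.
Qed.

Lemma localization_lift : exists h : {linear F' -> M}, forall v, h (psi v) = W v.
Proof.
exists (HB.pack_for {linear F' -> M} lift (GRing.isLinear.Build _ _ _ _ lift lift_linear)).
move=> v /=; have [[[s _] _] /= [Ss _ _]] := fraction (psi v).
apply: (localization_scaler_inj Ss).
by rewrite (liftP Ss (esym (psiZ _ _))) linearZ.
Qed.

End Lift.

Lemma localization_ext (M : lmodType R') (h1 h2 : {linear F' -> M}) :
  (forall v, h1 (psi v) = h2 (psi v)) -> h1 =1 h2.
Proof.
move=> e z; case: loc => _ _ _ frac _; have [v [s [Ss sz]]] := frac z.
by apply: (localization_scaler_inj Ss); rewrite -!linearZ /= sz e.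
Qed.

Lemma common_denominators (a : nat -> nat -> R') (N : nat -> nat) :
  (forall n l, (N n <= l)%N -> a n l = 0) ->
  exists (t : nat -> R) (r : nat -> nat -> R),
    [/\ forall n, S (t n), forall n l, phi (t n) * a n l = phi (r n l)
      & forall n l, (N n <= l)%N -> r n l = 0].
Proof.
move=> a0; have row n : exists p : R * (nat -> R),
    [/\ S p.1, forall l, phi p.1 * a n l = phi (p.2 l) & forall l, (N n <= l)%N -> p.2 l = 0].
  have [s [r [Ss sa r0]]] := common_denominator (a n) (N n).
  exists (s, r); split=> // l; case: (ltnP l (N n)) => [/sa //|Nl].
  by rewrite /= a0 // r0 // mulr0 rmorph0.
have [tr trP] := choice _ row.
by exists (fun n => (tr n).1), (fun n => (tr n).2); split=> n; case: (trP n).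
Qed.

Lemma dual_basis_clear_denominators x rel N a :
  dual_basis (psi \o x) (map phi \o rel) N a ->
  exists (t u : nat -> R) (r v : nat -> nat -> R),
    [/\ forall n, S (t n), forall n, S (u n), forall k l, S (v k l)
      & cleared_dual_basis x rel N t u r v].
Proof.
case=> a0 a_gen a_rel; case: loc => -[_ _ ker_phi] _ _ _ ker_psi.
have [t [r [St ta r0]]] := common_denominators a0.
have u_ex n : exists o, S o /\ o *: (\sum_(l < N n) r n l *: x l - t n *: x n) = 0.
  apply: ker_psi; rewrite psiB psi_sum psiZ -[psi (x n)](a_gen n) scaler_sumr.
  by apply/eqP; rewrite subr_eq0; apply/eqP/eq_bigr => l _; rewrite psiZ scalerA ta.
pose w k l := \sum_(i < size (rel k))
  (rel k)`_i * (\prod_(j < size (rel k) | j != i) t j) * r i l.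
have v_ex k l : exists o, S o /\ o * w k l = 0.
  apply: ker_phi; rewrite (rmorph_cleared_sum (rel k) (fun i => ta i l)).
  have := a_rel k l; rewrite /= (big_nth_map phi (fun b i => b * a i l)) => ->.
  by rewrite mulr0.
have [u uP] := choice _ u_ex.
have [v vP] := choice _ (fun kl : nat * nat => v_ex kl.1 kl.2).
exists t, u, r, (fun k l => v (k, l)); split=> //.
- by move=> n; case: (uP n).
- by move=> k l; case: (vP (k, l)).
by split=> // [n | k l]; [case: (uP n) | case: (vP (k, l))].
Qed.

Lemma cleared_dual_basis_localize x rel N t u r v :
  (forall n, S (t n)) -> (forall n, S (u n)) -> (forall k l, S (v k l)) ->
  cleared_dual_basis x rel N t u r v ->
  exists a, dual_basis (psi \o x) (map phi \o rel) N a.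
Proof.
move=> St Su Sv [r0 u_gen v_rel].
have [tinv tinvP] : exists tinv : nat -> R', forall n, phi (t n) * tinv n = 1.
  by case: loc => -[unit_phi _ _] _ _ _ _; exact: choice _ (fun n => unit_phi _ (St n)).
pose a n l := phi (r n l) * tinv n.
have ta n l : phi (t n) * a n l = phi (r n l) by rewrite /a mulrCA tinvP mulr1.
exists a; split.
- by move=> n l Nl; rewrite /a r0 // rmorph0 mul0r.
- move=> n /=; apply: (localization_scaler_inj (St n)).
  have /eqP := psi_torsion (Su n) (u_gen n).
  rewrite psiB psi_sum subr_eq0 psiZ => /eqP <-; rewrite scaler_sumr.
  by apply: eq_bigr => l _; rewrite psiZ scalerA ta.
move=> k l /=; rewrite (big_nth_map phi (fun b i => b * a i l)).
have St_prod : S (\prod_(j < size (rel k)) t j) by case: S_mul => S1 SM; apply: big_ind.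
apply: (localization_mulr_inj St_prod); rewrite mulr0.
rewrite -(rmorph_cleared_sum (rel k) (fun i => ta i l)).
exact: phi_torsion (Sv k l) (v_rel k l).
Qed.

End Localization.

Lemma projective_dual_basis (R : comPzRingType) (P : lmodType R) (y : nat -> P)
    (rels : nat -> seq R) :
  (forall z, exists c, z = lincomb c y) -> (forall k, lincomb (rels k) y = 0) ->
  projective P -> exists N a, dual_basis y rels N a.
Proof.
move=> gen rels0 projP.
have comb_onto z : exists g, free_comb y g = z.
  have [c ->] := gen z; exists (\sum_(i < size c) << c`_i *g (i : nat) >>).
  by rewrite linear_sum; apply: eq_bigr => i _; exact: free_combU.
have [h hP] := projP _ _ (free_comb y : {linear _ -> _}) idfun comb_onto.
exists (fun n => free_bound (h (y n))), (fun n l => (h (y n))@_l); split.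
- by move=> n l /mcoeff_free_bound.
- by move=> n; rewrite -[RHS]hP.
move=> k l; transitivity (h (lincomb (rels k) y))@_l; last first.
  by rewrite rels0 linear0 mcoeff0.
rewrite linear_sum raddf_sum; apply: eq_bigr => i _.
by rewrite linearZ; symmetry; exact: mcoeffZ_free.
Qed.

Lemma dual_basis_projective (R R' : comPzRingType) (S : R -> Prop)
    (phi : {rmorphism R -> R'}) (F : lmodType R) (F' : lmodType R') (psi : F -> F')
    (x : nat -> F) (rel : nat -> seq R) N a :
  (forall v, exists c, v = lincomb c x) ->
  (forall c, lincomb c x = 0 ->
     exists d : seq R, forall i, c`_i = \sum_(k < size d) d`_k * (rel k)`_i) ->
  multiplicative S -> is_localization_module S phi psi ->
  dual_basis (psi \o x) (map phi \o rel) N a -> projective F'.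
Proof.
move=> gen relC S_mul loc [a0 a_gen a_rel] M P g f g_onto.
have [m mP] := choice _ (fun l => g_onto (f (psi (x l)))).
pose b n : restrict_scalars phi M := \sum_(l < N n) a n l *: m l.
have b_rel k : lincomb (rel k) b = 0.
  pose L := \max_(i < size (map phi (rel k))) N i.
  have bL (i : 'I_(size (map phi (rel k)))) : b i = \sum_(l < L) a i l *: m l.
    apply: (@sum_ord_widen _ (fun l => a i l *: m l)) => [|l /a0 ->].
      exact: leq_bigmax.
    by rewrite scale0r.
  rewrite -lincomb_map /lincomb; under eq_bigr do rewrite bL scaler_sumr.
  rewrite exchange_big big1 //= => l _.
  under eq_bigr do rewrite scalerA.
  by rewrite -scaler_suml (a_rel k l) scale0r.
have [W Wx] := presentation_lift gen relC b_rel.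
have [h hW] := localization_lift S_mul loc W.
exists h; apply: (localization_ext loc (h1 := g \o h) (h2 := f)) => v /=.
have [c ->] := gen v.
rewrite hW linear_lincomb (psi_lincomb loc) linear_lincomb -lincomb_map linear_lincomb.
rewrite /lincomb; apply: eq_bigr => i _; congr (_ *: _) => /=.
rewrite Wx linear_sum -[psi (x i)](a_gen i) linear_sum; apply: eq_bigr => l _.
by rewrite !linearZ /= mP.
Qed.

Theorem proposition2p2 (R : comPzRingType) (F : lmodType R) (T : R -> Prop) :
  countably_presented F -> flat F -> multiplicative T ->
  (exists (RT : comPzRingType) (phi : {rmorphism R -> RT}) (FT : lmodType RT)
          (psi : F -> FT),
     is_localization_module T phi psi /\ projective FT) ->
  exists S : R -> Prop,
    [/\ forall r, S r -> T r, multiplicative S, countable_subset S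
      & forall (RS : comPzRingType) (phi : {rmorphism R -> RS})
               (FS : lmodType RS) (psi : F -> FS),
          is_localization_module S phi psi -> projective FS].
Proof.
move=> [x [rel [gen relK relC]]] _ T_mul [RT [phiT [FT [psiT [locT projT]]]]].
have relT k : lincomb ((map phiT \o rel) k) (psiT \o x) = 0.
  by rewrite -(psi_lincomb locT) relK (psi0 locT).
have [N [a dbT]] := projective_dual_basis (localization_generated locT gen) relT projT.
have [t [u [r [v [Tt Tu Tv cleared]]]]] := dual_basis_clear_denominators T_mul locT dbT.
pose e (i : nat + nat + nat * nat) :=
  match i with inl (inl n) => t n | inl (inr n) => u n | inr (k, l) => v k l end.
have S_mul := generated_monoid_multiplicative e.
exists (generated_monoid e); split=> //.
- apply: generated_monoid_sub => // -[[n|n]|[k l]]; [exact: Tt | exact: Tu | exact: Tv].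
- exact: generated_monoid_countable.
move=> RS phiS FS psiS locS.
have [aS dbS] := cleared_dual_basis_localize S_mul locS
  (fun n => generated_monoid_gen e (inl (inl n)))
  (fun n => generated_monoid_gen e (inl (inr n)))
  (fun k l => generated_monoid_gen e (inr (k, l))) cleared.
exact: dual_basis_projective gen relC S_mul locS dbS.
Qed.
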